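(* Let $X$ be a non-degenerate random variable with $E|X|<\infty$ whose cumulative distribution function $F$ is differentiable with density $f$, and let $\mu=EX$. Then $$\lim_{\alpha\to 1/2-} s_2(\alpha) = 2F(\mu)-1 .$$
   Context: For a random variable $X$ with $E|X|<\infty$ and $\tau\in(0,1)$, the $\tau$-expectile $e_X(\tau)$ is the unique real number $t$ satisfying $\tau\, E(X-t)_+ = (1-\tau)\, E(X-t)_-$, where $x_+=\max\{x,0\}$ and $x_-=\max\{-x,0\}$; $e_X(1/2)=\mu=EX$. For $\alpha\in(0,1/2)$ the normalized expectile skewness is $$s_2(\alpha) = \frac{1}{1-2\alpha}\cdot\frac{e_X(1-\alpha)+e_X(\alpha)-2\mu}{e_X(1-\alpha)-e_X(\alpha)}.$$ *)

From Stdlib Require Import Reals Lra.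
Open Scope R_scope.

Definition is_cdf (F : R -> R) : Prop :=
  (forall x y, x <= y -> F x <= F y) /\
  (forall x, Un_cv (fun n => F (x + / INR (S n))) (F x)) /\
  (forall eps, 0 < eps -> exists M, forall x, x <= M -> Rabs (F x) < eps) /\
  (forall eps, 0 < eps -> exists M, forall x, M <= x -> Rabs (F x - 1) < eps).

Definition degenerate (F : R -> R) : Prop :=
  exists c, forall x, F x = if Rle_dec c x then 1 else 0.

Definition int_upper (g : R -> R) (t L : R) : Prop :=
  forall eps, 0 < eps -> exists M, forall b, M <= b ->
    exists pr : Riemann_integrable g t b, Rabs (RiemannInt pr - L) < eps.

Definition int_lower (g : R -> R) (t L : R) : Prop :=
  forall eps, 0 < eps -> exists M, forall a, a <= M ->
    exists pr : Riemann_integrable g a t, Rabs (RiemannInt pr - L) < eps.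

(* E (X - t)_+ = int_t^{+oo} (1 - F)   and   E (X - t)_- = int_{-oo}^t F. *)
Definition Epos (F : R -> R) (t L : R) : Prop := int_upper (fun x => 1 - F x) t L.
Definition Eneg (F : R -> R) (t L : R) : Prop := int_lower F t L.

Definition integrable (F : R -> R) : Prop :=
  exists Lp Lm, Epos F 0 Lp /\ Eneg F 0 Lm.

Definition is_mean (F : R -> R) (mu : R) : Prop :=
  exists Lp Lm, Epos F 0 Lp /\ Eneg F 0 Lm /\ mu = Lp - Lm.

Definition is_expectile (F : R -> R) (tau t : R) : Prop :=
  exists Lp Lm, Epos F t Lp /\ Eneg F t Lm /\ tau * Lp = (1 - tau) * Lm.

Definition s2 (e : R -> R) (mu alpha : R) : R :=
  / (1 - 2 * alpha) * ((e (1 - alpha) + e alpha - 2 * mu) / (e (1 - alpha) - e alpha)).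

From Stdlib Require Import Reals Lra.
From Coquelicot Require Import Coquelicot.
Open Scope R_scope.

(* Let S(t) = E|X - t|. Since F is continuous, S is positive, 1-Lipschitz, and
   S(t) - S(s) is the integral of 2F - 1 over [s, t]. Combined with
   E(X - t)_+ - E(X - t)_- = mu - t, the expectile equation reads
   e(tau) - mu = (2 tau - 1) S(e(tau)). Hence e(alpha), e(1 - alpha) -> mu as
   alpha -> 1/2, and s2(alpha) is exactly the mean of 2F - 1 over
   [e(alpha), e(1 - alpha)], which tends to 2F(mu) - 1 by continuity of F at mu. *)

Lemma ex_RInt_continuous_R (g : R -> R) a b : (forall x, continuous g x) -> ex_RInt g a b.
Proof. intros Hg; apply (ex_RInt_continuous (V := R_CompleteNormedModule)); auto. Qed.

Lemma RInt_ge_const (g : R -> R) a b c :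
  a <= b -> ex_RInt g a b -> (forall x, a < x < b -> c <= g x) ->
  (b - a) * c <= RInt g a b.
Proof.
intros Hab Hg Hc.
apply (is_RInt_le (fun _ => c) g a b); [exact Hab | | | exact Hc].
- apply (is_RInt_const (V := R_NormedModule)).
- apply (RInt_correct (V := R_CompleteNormedModule)), Hg.
Qed.

Lemma RInt_mean_continuous (g : R -> R) m eps :
  (forall a b, ex_RInt g a b) -> continuous g m -> 0 < eps ->
  exists delta, 0 < delta /\ forall l u, l < u -> Rabs (l - m) < delta ->
    Rabs (u - m) < delta -> Rabs (RInt g l u / (u - l) - g m) < eps.
Proof.
intros g_int g_cont Heps.
assert (Heps2 : 0 < eps / 2) by lra.
destruct (proj1 (continuity_pt_locally g m) (proj2 (continuity_pt_filterlim g m) g_cont)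
                    (mkposreal _ Heps2)) as [delta Hdelta].
exists delta; split; [apply cond_pos |]; intros l u Hlu Hl Hu.
assert (Hmean : RInt g l u / (u - l) - g m = RInt (fun y => g y - g m) l u / (u - l)).
{ rewrite (RInt_minus (V := R_CompleteNormedModule)) by (auto; apply ex_RInt_const).
  rewrite RInt_const; unfold minus, plus, opp, scal; simpl; unfold mult; simpl.
  field; lra. }
assert (Hbound : Rabs (RInt (fun y => g y - g m) l u) <= (u - l) * (eps / 2)).
{ apply abs_RInt_le_const; [lra | | ].
  - apply (ex_RInt_minus (V := R_NormedModule)); [auto | apply ex_RInt_const].
  - intros y Hy; apply Rlt_le, (Hdelta y); change (Rabs (y - m) < delta).
    revert Hl Hu; split_Rabs; lra. }
rewrite Hmean; unfold Rdiv; rewrite Rabs_mult, Rabs_inv, (Rabs_right (u - l)) by lra.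
apply (Rmult_lt_reg_r (u - l)); [lra |].
rewrite Rmult_assoc, Rinv_l, Rmult_1_r by lra; nra.
Qed.

Section ImproperIntegrals.

Variable g : R -> R.
Hypothesis g_int : forall a b, ex_RInt g a b.

Lemma int_upper_is_lim t L : int_upper g t L <-> is_lim (RInt g t) p_infty L.
Proof.
rewrite <- is_lim_spec; split.
- intros H eps; destruct (H eps (cond_pos eps)) as [M HM]; exists M; intros b Hb.
  destruct (HM b (Rlt_le _ _ Hb)) as [pr Hpr]; now rewrite (RInt_Reals _ _ _ pr).
- intros H eps Heps; destruct (H (mkposreal eps Heps)) as [M HM]; exists (M + 1); intros b Hb.
  exists (ex_RInt_Reals_0 _ _ _ (g_int t b)); rewrite <- RInt_Reals; apply HM; lra.
Qed.

Lemma int_lower_is_lim t L :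
  int_lower g t L <-> is_lim (fun a => RInt g a t) m_infty L.
Proof.
rewrite <- is_lim_spec; split.
- intros H eps; destruct (H eps (cond_pos eps)) as [M HM]; exists M; intros a Ha.
  destruct (HM a (Rlt_le _ _ Ha)) as [pr Hpr]; now rewrite (RInt_Reals _ _ _ pr).
- intros H eps Heps; destruct (H (mkposreal eps Heps)) as [M HM]; exists (M - 1); intros a Ha.
  exists (ex_RInt_Reals_0 _ _ _ (g_int a t)); rewrite <- RInt_Reals; apply HM; lra.
Qed.

Lemma int_upper_shift s t L : int_upper g s L -> int_upper g t (L - RInt g s t).
Proof.
rewrite !int_upper_is_lim; intros H.
apply (is_lim_ext (fun b => RInt g s b - RInt g s t)).
- intros b; rewrite <- (RInt_Chasles g s t b) by auto; unfold plus; simpl; ring.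
- apply is_lim_minus'; [exact H | apply is_lim_const].
Qed.

Lemma int_lower_shift s t L : int_lower g s L -> int_lower g t (L + RInt g s t).
Proof.
rewrite !int_lower_is_lim; intros H.
apply (is_lim_ext (fun a => RInt g a s + RInt g s t)).
- intros a; now rewrite <- (RInt_Chasles g a s t) by auto.
- apply (is_lim_plus _ _ _ L (RInt g s t)); [exact H | apply is_lim_const | easy].
Qed.

Lemma int_upper_unique t L1 L2 : int_upper g t L1 -> int_upper g t L2 -> L1 = L2.
Proof.
rewrite !int_upper_is_lim; intros H1%is_lim_unique H2%is_lim_unique.
rewrite H1 in H2; now injection H2.
Qed.

Lemma int_lower_unique t L1 L2 : int_lower g t L1 -> int_lower g t L2 -> L1 = L2.
Proof.
rewrite !int_lower_is_lim; intros H1%is_lim_unique H2%is_lim_unique.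
rewrite H1 in H2; now injection H2.
Qed.

Hypothesis g_ge0 : forall x, 0 <= g x.

Lemma int_upper_ge0 t L : int_upper g t L -> 0 <= L.
Proof.
rewrite int_upper_is_lim; intros H.
apply (is_lim_le_loc (fun _ => 0) (RInt g t) p_infty 0 L); [| apply is_lim_const | exact H].
exists t; intros b Hb; apply RInt_ge_0; auto; lra.
Qed.

Lemma int_lower_ge0 t L : int_lower g t L -> 0 <= L.
Proof.
rewrite int_lower_is_lim; intros H.
apply (is_lim_le_loc (fun _ => 0) (fun a => RInt g a t) m_infty 0 L);
  [| apply is_lim_const | exact H].
exists t; intros a Ha; apply RInt_ge_0; auto; lra.
Qed.

End ImproperIntegrals.

Lemma cdf_ge0 F x : is_cdf F -> 0 <= F x.
Proof.
intros [F_incr [_ [F_left _]]].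
destruct (Rle_dec 0 (F x)) as [|Hneg]; [easy |].
destruct (F_left (- F x)) as [M HM]; [lra |].
specialize (HM (Rmin x M) (Rmin_r _ _)); specialize (F_incr _ _ (Rmin_l x M)).
revert HM; split_Rabs; lra.
Qed.

Lemma cdf_le1 F x : is_cdf F -> F x <= 1.
Proof.
intros [F_incr [_ [_ F_right]]].
destruct (Rle_dec (F x) 1) as [|Hgt]; [easy |].
destruct (F_right (F x - 1)) as [M HM]; [lra |].
specialize (HM (Rmax x M) (Rmax_r _ _)); specialize (F_incr _ _ (Rmax_l x M)).
revert HM; split_Rabs; lra.
Qed.

Section ExpectedDeviations.

Variable F : R -> R.
Hypothesis F_cdf : is_cdf F.
Hypothesis F_cont : forall x, continuous F x.
Variables Lp Lm : R.
Hypothesis F_Epos0 : Epos F 0 Lp.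
Hypothesis F_Eneg0 : Eneg F 0 Lm.

Let mu := Lp - Lm.

Lemma continuous_1_minus_F x : continuous (fun y => 1 - F y) x.
Proof. apply (continuous_minus (fun _ => 1) F); [apply continuous_const | apply F_cont]. Qed.

Lemma continuous_2F_minus_1 x : continuous (fun y => 2 * F y - 1) x.
Proof.
apply (continuous_minus (fun y => 2 * F y) (fun _ => 1)); [| apply continuous_const].
apply (continuous_scal_r 2 F), F_cont.
Qed.

Lemma ex_RInt_F a b : ex_RInt F a b.
Proof. apply ex_RInt_continuous_R, F_cont. Qed.

Lemma ex_RInt_1_minus_F a b : ex_RInt (fun x => 1 - F x) a b.
Proof. apply ex_RInt_continuous_R, continuous_1_minus_F. Qed.

Lemma ex_RInt_2F_minus_1 a b : ex_RInt (fun x => 2 * F x - 1) a b.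
Proof. apply ex_RInt_continuous_R, continuous_2F_minus_1. Qed.

(* [Ep t], [En t], [Eabs t] are E(X - t)_+, E(X - t)_- and E|X - t|. *)
Definition Ep t := Lp - RInt (fun x => 1 - F x) 0 t.
Definition En t := Lm + RInt F 0 t.
Definition Eabs t := Ep t + En t.

Lemma Epos_Ep t : Epos F t (Ep t).
Proof. apply int_upper_shift; [apply ex_RInt_1_minus_F | exact F_Epos0]. Qed.

Lemma Eneg_En t : Eneg F t (En t).
Proof. apply int_lower_shift; [apply ex_RInt_F | exact F_Eneg0]. Qed.

Lemma Ep_ge0 t : 0 <= Ep t.
Proof.
apply (int_upper_ge0 (fun x => 1 - F x) ex_RInt_1_minus_F) with t; [| apply Epos_Ep].
intros x; pose proof (cdf_le1 F x F_cdf); lra.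
Qed.

Lemma En_ge0 t : 0 <= En t.
Proof.
apply (int_lower_ge0 F ex_RInt_F) with t; [| apply Eneg_En].
intros x; apply cdf_ge0, F_cdf.
Qed.

Lemma Ep_sub_En t : Ep t - En t = mu - t.
Proof.
assert (Hsum : RInt (fun x => 1 - F x) 0 t + RInt F 0 t = t).
{ rewrite <- (RInt_plus (V := R_CompleteNormedModule)) by
    (apply ex_RInt_1_minus_F || apply ex_RInt_F).
  rewrite (RInt_ext _ (fun _ => 1)) by (intros; unfold plus; simpl; ring).
  rewrite RInt_const; unfold scal; simpl; unfold mult; simpl; ring. }
unfold Ep, En, mu; lra.
Qed.

Lemma Eabs_sub s t : Eabs t - Eabs s = RInt (fun x => 2 * F x - 1) s t.
Proof.
assert (HEabs : forall t, Eabs t = Lp + Lm + RInt (fun x => 2 * F x - 1) 0 t).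
{ intros t'; unfold Eabs, Ep, En.
  rewrite (RInt_ext (fun x => 2 * F x - 1) (fun x => minus (F x) (1 - F x)))
    by (intros; unfold minus, plus, opp; simpl; ring).
  rewrite (RInt_minus (V := R_CompleteNormedModule) F (fun x => 1 - F x)) by
    (apply ex_RInt_F || apply ex_RInt_1_minus_F).
  unfold minus, plus, opp; simpl; ring. }
rewrite !HEabs, <- (RInt_Chasles (V := R_CompleteNormedModule) _ 0 s t)
  by apply ex_RInt_2F_minus_1.
unfold plus; simpl; ring.
Qed.

Lemma Eabs_lipschitz s t : Rabs (Eabs t - Eabs s) <= Rabs (t - s).
Proof.
assert (Hle : forall a b, a <= b -> Rabs (Eabs b - Eabs a) <= b - a).
{ intros a b Hab; rewrite Eabs_sub; rewrite <- (Rmult_1_r (b - a)).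
  apply abs_RInt_le_const; [exact Hab | apply ex_RInt_2F_minus_1 |].
  intros x _; pose proof (cdf_ge0 F x F_cdf); pose proof (cdf_le1 F x F_cdf).
  apply Rabs_le; lra. }
destruct (Rle_dec s t) as [Hst | Hts].
- rewrite (Rabs_right (t - s)) by lra; auto.
- rewrite Rabs_minus_sym, (Rabs_minus_sym t); rewrite (Rabs_right (s - t)) by lra.
  apply Hle; lra.
Qed.

(* A Markov-type bound: E|X - t| >= h P(|X - t| > h). *)
Lemma Eabs_ge_window t h : 0 <= h -> h * (1 - (F (t + h) - F (t - h))) <= Eabs t.
Proof.
intros Hh.
assert (HEp : Ep t = Ep (t + h) + RInt (fun x => 1 - F x) t (t + h)).
{ unfold Ep; rewrite <- (RInt_Chasles (V := R_CompleteNormedModule) _ 0 t (t + h))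
    by apply ex_RInt_1_minus_F.
  unfold plus; simpl; ring. }
assert (HEn : En t = En (t - h) + RInt F (t - h) t).
{ unfold En; rewrite <- (RInt_Chasles (V := R_CompleteNormedModule) _ 0 (t - h) t)
    by apply ex_RInt_F.
  unfold plus; simpl; ring. }
assert (Hright : (t + h - t) * (1 - F (t + h)) <= RInt (fun x => 1 - F x) t (t + h)).
{ apply RInt_ge_const; [lra | apply ex_RInt_1_minus_F |].
  intros x Hx; assert (F x <= F (t + h)) by (apply (proj1 F_cdf); lra); lra. }
assert (Hleft : (t - (t - h)) * F (t - h) <= RInt F (t - h) t).
{ apply RInt_ge_const; [lra | apply ex_RInt_F |].
  intros x Hx; apply (proj1 F_cdf); lra. }
pose proof (Ep_ge0 (t + h)); pose proof (En_ge0 (t - h)).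
unfold Eabs; rewrite HEp, HEn; nra.
Qed.

Lemma Eabs_pos t : 0 < Eabs t.
Proof.
assert (Hquarter : 0 < / 4) by lra.
destruct (proj1 (continuity_pt_locally F t) (proj2 (continuity_pt_filterlim F t) (F_cont t))
                    (mkposreal _ Hquarter)) as [d Hd].
pose proof (cond_pos d) as Hd0.
assert (Hright : Rabs (F (t + d / 2) - F t) < / 4).
{ apply Hd; change (Rabs (t + d / 2 - t) < d); split_Rabs; lra. }
assert (Hleft : Rabs (F (t - d / 2) - F t) < / 4).
{ apply Hd; change (Rabs (t - d / 2 - t) < d); split_Rabs; lra. }
assert (Hwindow := Eabs_ge_window t (d / 2)).
revert Hright Hleft; split_Rabs; nra.
Qed.

Lemma is_expectile_Ep_En tau t : is_expectile F tau t -> tau * Ep t = (1 - tau) * En t.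
Proof.
intros [Lp' [Lm' [HLp' [HLm' Htau]]]].
rewrite (int_upper_unique _ ex_RInt_1_minus_F t Lp' (Ep t) HLp' (Epos_Ep t)) in Htau.
now rewrite (int_lower_unique _ ex_RInt_F t Lm' (En t) HLm' (Eneg_En t)) in Htau.
Qed.

Lemma expectile_sub_mean tau t : is_expectile F tau t -> t - mu = (2 * tau - 1) * Eabs t.
Proof.
intros Htau%is_expectile_Ep_En; pose proof (Ep_sub_En t); unfold Eabs; nra.
Qed.

Lemma expectile_dist_mean tau t :
  is_expectile F tau t -> Rabs (2 * tau - 1) <= 1 / 2 ->
  Rabs (t - mu) <= 2 * Rabs (2 * tau - 1) * Eabs mu.
Proof.
intros Htau Hk.
assert (Hdist : Rabs (t - mu) = Rabs (2 * tau - 1) * Eabs t).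
{ rewrite (expectile_sub_mean tau t Htau), Rabs_mult.
  now rewrite (Rabs_pos_eq (Eabs t)) by apply Rlt_le, Eabs_pos. }
assert (Hlip : Eabs t <= Eabs mu + Rabs (t - mu)).
{ pose proof (Eabs_lipschitz mu t) as Hlip; revert Hlip; split_Rabs; lra. }
pose proof (Rabs_pos (2 * tau - 1)); pose proof (Rabs_pos (t - mu)); nra.
Qed.

Lemma expectiles_lt alpha l u :
  0 < alpha < 1 / 2 -> is_expectile F alpha l -> is_expectile F (1 - alpha) u -> l < u.
Proof.
intros Ha Hl%expectile_sub_mean Hu%expectile_sub_mean.
pose proof (Eabs_pos l); pose proof (Eabs_pos u); nra.
Qed.

Lemma s2_eq_RInt_mean e alpha :
  0 < alpha < 1 / 2 -> is_expectile F alpha (e alpha) ->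
  is_expectile F (1 - alpha) (e (1 - alpha)) ->
  s2 e mu alpha =
  RInt (fun x => 2 * F x - 1) (e alpha) (e (1 - alpha)) / (e (1 - alpha) - e alpha).
Proof.
intros Ha Hl Hu.
pose proof (expectiles_lt alpha _ _ Ha Hl Hu) as Hlu.
apply expectile_sub_mean in Hl; apply expectile_sub_mean in Hu.
unfold s2; rewrite <- Eabs_sub.
replace (e (1 - alpha) + e alpha - 2 * mu)
  with ((1 - 2 * alpha) * (Eabs (e (1 - alpha)) - Eabs (e alpha))) by nra.
field; lra.
Qed.

Lemma s2_limit_half e :
  (forall tau, 0 < tau < 1 -> is_expectile F tau (e tau)) ->
  limit1_in (s2 e mu) (fun a => 0 < a < 1 / 2) (2 * F mu - 1) (1 / 2).
Proof.
intros He eps Heps.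
destruct (RInt_mean_continuous _ mu eps ex_RInt_2F_minus_1 (continuous_2F_minus_1 mu) Heps)
  as [delta [Hdelta Hmean]].
pose proof (Eabs_pos mu) as HEmu.
exists (Rmin (1 / 4) (delta / (4 * Eabs mu))); split.
{ apply Rmin_pos; [lra | apply Rdiv_lt_0_compat; lra]. }
intros alpha [[Ha0 Ha1] Hclose]; simpl in Hclose |- *; unfold R_dist in Hclose |- *.
assert (Hk : 1 - 2 * alpha < 2 * Rmin (1 / 4) (delta / (4 * Eabs mu))).
{ revert Hclose; split_Rabs; lra. }
pose proof (Rmin_l (1 / 4) (delta / (4 * Eabs mu))).
pose proof (Rmin_r (1 / 4) (delta / (4 * Eabs mu))).
assert (Hscale : delta / (4 * Eabs mu) * (4 * Eabs mu) = delta) by (field; lra).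
assert (Hk1 : 1 - 2 * alpha <= 1 / 2) by lra.
assert (Hk2 : 2 * (1 - 2 * alpha) * Eabs mu < delta) by nra.
assert (Hl : is_expectile F alpha (e alpha)) by (apply He; lra).
assert (Hu : is_expectile F (1 - alpha) (e (1 - alpha))) by (apply He; lra).
rewrite (s2_eq_RInt_mean e alpha) by (auto; lra).
apply Hmean; [now apply (expectiles_lt alpha) | |].
- eapply Rle_lt_trans; [apply (expectile_dist_mean alpha) |]; [exact Hl | | ];
    rewrite Rabs_left1 by lra; lra.
- eapply Rle_lt_trans; [apply (expectile_dist_mean (1 - alpha)) |]; [exact Hu | | ];
    rewrite Rabs_right by lra; lra.
Qed.

End ExpectedDeviations.

Theorem mainTheorem3 (F f e : R -> R) (mu : R) :
  is_cdf F ->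
  (forall x, derivable_pt_lim F x (f x)) ->
  ~ degenerate F ->
  integrable F ->
  is_mean F mu ->
  (forall tau, 0 < tau < 1 -> is_expectile F tau (e tau)) ->
  limit1_in (s2 e mu) (fun a => 0 < a < 1/2) (2 * F mu - 1) (1/2).
Proof.
intros F_cdf F_deriv _ _ [Lp [Lm [HLp [HLm ->]]]] He.
assert (F_cont : forall x, continuous F x).
{ intros x; apply continuity_pt_filterlim, derivable_continuous_pt.
  exists (f x); apply F_deriv. }
exact (s2_limit_half F F_cdf F_cont Lp Lm HLp HLm e He).
Qed.
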